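(* Let $M=(v_1,\dots,v_n)$ be a finite list of nonzero vectors generating $\mathbb{F}_2^3$ which is generic, i.e. $\sum_{i=1}^n v_i\ne\mathbf{0}$. Let $\lambda_u=n-\sum_{i=1}^n(-1)^{u\cdot v_i}$ for $u\in\mathbb{F}_2^3\setminus\{0\}$ and let $d_1\le\cdots\le d_7$ be the numbers $v_2(\lambda_u)$, $u\ne 0$, in increasing order. Then $d_1=d_2=d_3=d_4=1$ and $d_5,d_6,d_7>1$.
   Context: The $\lambda_u$ are the nonzero eigenvalues of the Laplacian of the Cayley graph $G(\mathbb{F}_2^3,M)$ (the matrix indexed by $\mathbb{F}_2^3$ with diagonal entries $n$ and $(u,w)$-entry $-\#\{i:u+v_i=w\}$ for $u\ne w$). $v_2$ is the $2$-adic valuation. *)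

From HB Require Import structures.
From mathcomp Require Import all_boot all_order all_algebra.
Set Implicit Arguments. Unset Strict Implicit. Unset Printing Implicit Defensive.
Import Order.TTheory GRing.Theory Num.Theory.
Local Open Scope ring_scope.

Notation F23 := 'rV['F_2]_3.

Definition dot (u v : F23) : 'F_2 := (u *m v^T) 0 0.

Definition lambda (M : seq F23) (u : F23) : int :=
  (size M)%:Z - \sum_(v <- M) (if dot u v == 0 then 1 else -1).

Definition dseq (M : seq F23) : seq nat :=
  sort leq [seq logn 2 `|lambda M u|%N | u <- enum [set u : F23 | u != 0]].

(** Writing N_u for the number of v_i with u.v_i = 1, one has λ_u = 2 N_u, so
   v_2(λ_u) = 1 + v_2(N_u); moreover N_u > 0 for u <> 0 because M spans.
   Reducing modulo 2, N_u ≡ u.s where s = Σ v_i <> 0, so v_2(λ_u) = 1 exactly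
   for the u outside the hyperplane s^⊥, and there are 4 of these in F_2^3. *)
From HB Require Import structures.
From mathcomp Require Import all_boot all_order all_algebra.
From mathcomp Require Import zify.
Import GRing.Theory.

Set Implicit Arguments.
Unset Strict Implicit.
Unset Printing Implicit Defensive.

Lemma sort_leq_min (m : nat) (L : seq nat) : all (leq m) L ->
  sort leq L = nseq (count_mem m L) m ++ sort leq (filter (predC1 m) L).
Proof.
move=> L_ge; apply: (sorted_eq leq_trans anti_leq).
- exact: (sort_sorted leq_total).
- have : all (leq m) (sort leq (filter (predC1 m) L)).
    by rewrite all_sort all_filter; apply: sub_all L_ge => x /= ->; rewrite implybT.
  elim: (count_mem m L) => [_ |k IHk t_ge] /=; first exact: (sort_sorted leq_total).
  by rewrite (path_sortedE leq_trans) all_cat all_nseq leqnn t_ge orbT IHk.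
- rewrite perm_sort -(perm_filterC (pred1 m) L); apply: perm_cat.
    by rewrite -size_filter -(all_pred1P _ _ (filter_all (pred1 m) L)).
  by rewrite perm_sym perm_sort.
Qed.

Lemma sort_leq_take_drop (m k : nat) (L : seq nat) :
  all (leq m) L -> count_mem m L = k ->
  take k (sort leq L) = nseq k m /\ all (ltn m) (drop k (sort leq L)).
Proof.
move=> L_ge cnt; rewrite (sort_leq_min L_ge) cnt.
rewrite take_size_cat ?drop_size_cat ?size_nseq //; split=> //.
rewrite all_sort all_filter; apply: sub_all L_ge => x /=.
by rewrite ltn_neqAle eq_sym => ->; rewrite andbT implybb.
Qed.

Lemma count_enum (T : finType) (A : {pred T}) (p : pred T) :
  count p (enum A) = #|[pred x in A | p x]|.
Proof.
rewrite cardE -size_filter /enum_mem -filter_predI; congr size.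
by apply: eq_filter => x; rewrite !inE andbC.
Qed.

Lemma logn_eq0 (p n : nat) : prime p -> 0 < n -> (logn p n == 0) = ~~ (p %| n).
Proof. by move=> p_pr n_gt0; rewrite eqn0Ngt logn_gt0 mem_primes p_pr n_gt0. Qed.

Lemma logn2_double (n : nat) : 0 < n -> logn 2 n.*2 = (logn 2 n).+1.
Proof. by move=> n_gt0; rewrite -muln2 lognM // (@logn_prime 2 2) // addn1. Qed.

Local Open Scope ring_scope.

Lemma sum_sign (T : Type) (a : pred T) (s : seq T) :
  \sum_(x <- s) (if a x then 1 else -1) = (size s)%:Z - (count (predC a) s).*2%:Z.
Proof.
elim: s => [|x s IHs]; first by rewrite big_nil.
by rewrite big_cons IHs /=; case: (a x) => /=; lia.
Qed.

Lemma F2_natr_neq0 (x : 'F_2) : x = (x != 0)%:R.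
Proof. by case: x => [[|[|k]] //= lt2]; apply: val_inj. Qed.

Lemma F2_natr_eq0 (k : nat) : ((k%:R : 'F_2) == 0) = ~~ odd k.
Proof. by rewrite -(Fp_nat_mod (isT : prime 2)) modn2; case: (odd k). Qed.

Section RowDot.

Variable n : nat.
Implicit Types (u v w s : 'rV['F_2]_n) (X : seq 'rV['F_2]_n).

(* For n = 3 this is [dot] unfolded, so the lemmas below apply to [dot] by conversion. *)
Local Notation "u ⋅ v" := ((u *m v^T) 0 0) (at level 40).

Lemma dotC u v : u ⋅ v = v ⋅ u.
Proof. by rewrite -[v in RHS]trmxK -trmx_mul [RHS]mxE. Qed.

Lemma dotDr u v w : u ⋅ (v + w) = u ⋅ v + u ⋅ w.
Proof. by rewrite linearD mulmxDr mxE. Qed.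

Lemma dotZr u a v : u ⋅ (a *: v) = a * (u ⋅ v).
Proof. by rewrite linearZ -scalemxAr mxE. Qed.

Lemma dot_sumr (I : Type) (r : seq I) (P : pred I) u (v_ : I -> 'rV_n) :
  u ⋅ (\sum_(i <- r | P i) v_ i) = \sum_(i <- r | P i) u ⋅ v_ i.
Proof. by rewrite linear_sum mulmx_sumr summxE. Qed.

Lemma dot_deltar u (j : 'I_n) : u ⋅ (delta_mx 0 j : 'rV_n) = u 0 j.
Proof. by rewrite trmx_delta -(colE j u) mxE. Qed.

Lemma dot_span_eq0 X u w :
  {in X, forall v, u ⋅ v = 0} -> w \in <<X>>%VS -> u ⋅ w = 0.
Proof.
move=> X_orth /(@coord_span _ _ _ (in_tuple X)) ->.
rewrite dot_sumr big1 // => i _; rewrite dotZr X_orth ?mulr0 //.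
exact: mem_nth.
Qed.

Lemma full_span_nonorth X u :
  <<X>>%VS = fullv -> u != 0 -> has (fun v => u ⋅ v != 0) X.
Proof.
move=> X_full; apply: contraNT => /hasPn X_orth; apply/eqP/rowP => j.
rewrite mxE -dot_deltar (@dot_span_eq0 X) ?X_full ?memvf // => v /X_orth.
by move/negbNE/eqP.
Qed.

Lemma card_nonorth s : s != 0 -> #|[set u : 'rV_n | u ⋅ s != 0]|.*2 = (2 ^ n)%N.
Proof.
have [j s_j | s_0] := pickP (fun j => s 0 j != 0); last first.
  by case/eqP; apply/rowP => j; rewrite mxE; apply/eqP/negbFE/s_0.
set A := [set u : 'rV_n | u ⋅ s != 0].
have shiftA : (fun u => u + delta_mx 0 j) @^-1: A = ~: A.
  apply/setP => u; rewrite !inE dotC dotDr dot_deltar [s ⋅ u]dotC.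
  by rewrite [s 0 j]F2_natr_neq0 s_j [u ⋅ s]F2_natr_neq0; case: (u ⋅ s != 0).
have := cardsC A; rewrite -shiftA card_preimset; last exact: addIr.
by rewrite card_mx card_Fp // mul1n addnn.
Qed.

Definition nonorth X u : nat := count (fun v => u ⋅ v != 0) X.

Lemma nonorth_gt0 X u : <<X>>%VS = fullv -> u != 0 -> (0 < nonorth X u)%N.
Proof. by move=> X_full u_nz; rewrite -has_count full_span_nonorth. Qed.

Lemma odd_nonorth X u : odd (nonorth X u) = (u ⋅ \sum_(v <- X) v != 0).
Proof.
rewrite dot_sumr (eq_bigr (fun v => (u ⋅ v != 0)%:R)) => [|v _]; last first.
  exact: F2_natr_neq0.
by rewrite -natr_sum -big_mkcond sum1_count F2_natr_eq0 negbK.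
Qed.

End RowDot.

Lemma lambdaE (M : seq F23) u : lambda M u = (nonorth M u).*2%:Z.
Proof. by rewrite /lambda sum_sign -[count _ M]/(nonorth M u); lia. Qed.

Lemma logn_lambda (M : seq F23) u : <<M>>%VS = fullv -> u != 0 ->
  logn 2 `|lambda M u| = (logn 2 (nonorth M u)).+1.
Proof. by move=> M_full u_nz; rewrite lambdaE absz_nat logn2_double ?nonorth_gt0. Qed.

Theorem mainTheorem17 (M : seq 'rV['F_2]_3) :
  all (fun v => v != 0) M ->
  (<<M>>%VS = fullv) ->
  \sum_(v <- M) v != 0 ->
  take 4 (dseq M) = nseq 4 1%N /\ all (fun d => (1 < d)%N) (drop 4 (dseq M)).
Proof.
(* Zero vectors would not change any λ_u. *)
move=> _ M_full sum_nz; apply: sort_leq_take_drop.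
  rewrite all_map; apply/allP => u; rewrite mem_enum inE => u_nz /=.
  by rewrite logn_lambda.
rewrite count_map count_enum -[4%N]/((2 ^ 3)./2)%N -(card_nonorth sum_nz) doubleK.
apply: eq_card => u; rewrite !inE.
have [->|u_nz] /= := eqVneq u 0; first by rewrite mul0mx mxE eqxx.
by rewrite logn_lambda // eqSS logn_eq0 ?nonorth_gt0 // dvdn2 negbK odd_nonorth.
Qed.
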